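(* Let $G$ be a graph on $n$ vertices, $t\ge 1$ an integer, and let $G'$, $\alpha$ be as in the construction below; let $k=n+t+1$, $\ell=2t+2t^2$, and let $\beta$ be defined by $\beta(v)=\alpha(v)$ for $v\in V_G\cup V_C$ and $\beta(b^i_j)=n+j$ for $i,j\in\{1,\ldots,t\}$. If $G$ has an independent set of size at least $t-1$, then $\mathcal{C}_k(G')$ contains a path from $\alpha$ to $\beta$ of length at most $\ell$.
   Context: Construction: with $V(G)=\{v_1,\ldots,v_n\}$, $V(G')=V_G\cup V_B\cup V_C$, where $V_G=\{g_1,\ldots,g_n\}$ induces a copy of $G$ ($g_ig_j$ an edge iff $v_iv_j\in E(G)$); $V_B=\{b^i_j\mid i,j\in\{1,\ldots,t\}\}$ with $b^i_jb^{i'}_{j'}$ an edge iff $i\ne i'$ and $j\ne j'$; all edges between $V_G$ and $V_B$ are present; $V_C=C_1\cup\cdots\cup C_{n+t+1}$ with the $C_i$ pairwise disjoint independent sets of size $2t+2t^2$ and no edges among vertices of $V_C$; each $g_i$ is adjacent to all of $V_C\setminus(C_i\cup C_{n+t+1})$; each vertex of $V_B$ is adjacent to all of $C_{n+t+1}$; no other edges. $\alpha(g_i)=i$, $\alpha(c)=i$ for $c\in C_i$, $\alpha(b^i_j)=n+i$. A $k$-coloring is a map $V\to\{1,\ldots,k\}$ with adjacent vertices colored differently; $\mathcal{C}_k(G')$ is the graph on the $k$-colorings of $G'$, two adjacent iff they differ on exactly one vertex. *)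

From mathcomp Require Import all_boot.
Set Implicit Arguments. Unset Strict Implicit. Unset Printing Implicit Defensive.

(* Vertices of G' (all indices 0-based):
   inl (inl a)        = g_{a+1}           (a : 'I_n)
   inl (inr (i, j))   = b^{i+1}_{j+1}     (i, j : 'I_t)
   inr (m, x)         = x-th element of C_{m+1}  (m : 'I_(n+t+1), x : 'I_(2t+2t^2)) *)
Definition Gvtx (n t : nat) : finType :=
  ('I_n + ('I_t * 'I_t) + ('I_(n + t + 1) * 'I_(2 * t + 2 * t ^ 2)))%type.

Definition Gedge (n t : nat) (e : rel 'I_n) (x y : Gvtx n t) : bool :=
  match x, y with
  | inl (inl a), inl (inl b) => e a b
  | inl (inl _), inl (inr _) => true
  | inl (inr _), inl (inl _) => true
  | inl (inr (i, j)), inl (inr (i', j')) => (i != i') && (j != j')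
  | inl (inl a), inr (m, _) => (val m != val a) && (val m != n + t)
  | inr (m, _), inl (inl a) => (val m != val a) && (val m != n + t)
  | inl (inr _), inr (m, _) => val m == n + t
  | inr (m, _), inl (inr _) => val m == n + t
  | inr _, inr _ => false
  end.

Definition alpha (n t : nat) (v : Gvtx n t) : nat :=
  match v with
  | inl (inl a) => val a + 1
  | inl (inr (i, _)) => n + (val i + 1)
  | inr (m, _) => val m + 1
  end.

Definition beta (n t : nat) (v : Gvtx n t) : nat :=
  match v with
  | inl (inl a) => val a + 1
  | inl (inr (_, j)) => n + (val j + 1)
  | inr (m, _) => val m + 1
  end.

Definition is_kcoloring (V : finType) (E : rel V) (k : nat) (c : V -> nat) : Prop :=
  (forall v, 1 <= c v <= k) /\ (forall x y, E x y -> c x != c y).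

Definition differ_one (V : finType) (c c' : V -> nat) : Prop :=
  #|[pred v : V | c v != c' v]| = 1.

Definition recolor_walk (V : finType) (E : rel V) (k : nat)
    (c0 c1 : V -> nat) (m : nat) (p : nat -> V -> nat) : Prop :=
  (forall v, p 0 v = c0 v) /\ (forall v, p m v = c1 v) /\
  (forall i, i <= m -> is_kcoloring E k (p i)) /\
  (forall i, i < m -> differ_one (p i) (p i.+1)).

From mathcomp Require Import all_boot zify.
Set Implicit Arguments. Unset Strict Implicit. Unset Printing Implicit Defensive.

(* Take t - 1 independent vertices a_1, ..., a_{t-1} of G.  Recoloring each
   g_{a_r} to k = n + t + 1, a color used only on C_{n+t+1} which no vertex of
   V_G sees, frees the color a_r for row r of V_B, since the only vertices of
   V_C seen by V_B are those of C_{n+t+1}.  So we move every row r < t to the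
   color a_r, which frees n + 1, ..., n + t - 1; then every column j < t to
   n + j; then the cells (r, t), r < t, to n + t; and finally lower the g_{a_r}
   back.  Each stage changes each vertex at most once and all intermediate
   colorings are proper, for a total of
   (t - 1) + (t - 1) t + t (t - 1) + (t - 1) + (t - 1) <= 2 t + 2 t^2 steps. *)

Definition recolorable (V : finType) (E : rel V) (k : nat) (c0 c1 : V -> nat)
    (M : nat) : Prop :=
  exists m p, m <= M /\ recolor_walk E k c0 c1 m p.

Definition mix (V : Type) (X : pred V) (c0 c1 : V -> nat) (v : V) : nat :=
  if X v then c1 v else c0 v.

Section Recolorable.
Variables (V : finType) (E : rel V) (k : nat).

Lemma is_kcoloring_ext (c c' : V -> nat) :
  c =1 c' -> is_kcoloring E k c -> is_kcoloring E k c'.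
Proof. by move=> eq_c [range proper]; split=> [v|x y /proper]; rewrite -!eq_c. Qed.

Lemma differ_one_ext (c1 c1' c2 c2' : V -> nat) :
  c1 =1 c1' -> c2 =1 c2' -> differ_one c1 c2 -> differ_one c1' c2'.
Proof.
by move=> eq1 eq2; rewrite /differ_one => <-; apply: eq_card => v; rewrite !inE eq1 eq2.
Qed.

Lemma differ_one_sym (c c' : V -> nat) : differ_one c c' -> differ_one c' c.
Proof. by rewrite /differ_one => <-; apply: eq_card => v; rewrite !inE eq_sym. Qed.

Lemma recolorable_le (c0 c1 : V -> nat) M M' :
  M <= M' -> recolorable E k c0 c1 M -> recolorable E k c0 c1 M'.
Proof. by move=> le_M [m [p [le_m w]]]; exists m, p; split=> //; lia. Qed.

Lemma recolorable_sym (c0 c1 : V -> nat) M :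
  recolorable E k c0 c1 M -> recolorable E k c1 c0 M.
Proof.
move=> [m [p [le_m [p0 [pm [pcol pstep]]]]]].
exists m, (fun i => p (m - i)); split=> //; split; last split; last split.
- by move=> v; rewrite subn0.
- by move=> v; rewrite subnn.
- by move=> i _; apply: pcol; rewrite leq_subr.
- move=> i lt_im; apply: differ_one_sym.
  have -> : m - i = (m - i.+1).+1 by lia.
  by apply: pstep; lia.
Qed.

Lemma recolorable_trans (c0 c1 c2 : V -> nat) M1 M2 :
  recolorable E k c0 c1 M1 -> recolorable E k c1 c2 M2 ->
  recolorable E k c0 c2 (M1 + M2).
Proof.
move=> [m1 [p1 [le1 [p10 [p1m [p1col p1step]]]]]].
move=> [m2 [p2 [le2 [p20 [p2m [p2col p2step]]]]]].
pose p i := if i <= m1 then p1 i else p2 (i - m1).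
have p_right i : m1 <= i -> p i =1 p2 (i - m1).
  move=> le_i v; rewrite /p; case: leqP => // le_im1.
  have -> : i = m1 by lia.
  by rewrite subnn p20 p1m.
exists (m1 + m2), p; split; first lia; split; last split; last split.
- by move=> v; rewrite /p /= p10.
- by move=> v; rewrite p_right ?leq_addr // addKn p2m.
- move=> i le_i; case: (leqP i m1) => [le_im1|lt_m1i].
    by rewrite /p le_im1; apply: p1col.
  apply: (is_kcoloring_ext (fun v => esym (p_right i (ltnW lt_m1i) v))).
  by apply: p2col; lia.
- move=> i lt_i; case: (ltnP i m1) => [lt_im1|le_m1i].
    by rewrite /p lt_im1 ltnW //; apply: p1step.
  apply: (differ_one_ext (fun v => esym (p_right _ le_m1i v))
                         (fun v => esym (p_right _ (leqW le_m1i) v))).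
  by rewrite subSn //; apply: p2step; lia.
Qed.

(* The walk recolors the vertices where [c0] and [c1] differ one at a time. *)
Lemma recolorable_mix (c0 c1 : V -> nat) (D : {pred V}) :
  (forall v, c0 v != c1 v -> v \in D) ->
  (forall X : pred V, is_kcoloring E k (mix X c0 c1)) ->
  recolorable E k c0 c1 #|D|.
Proof.
move=> diffD mixes; pose vs := enum [pred v | c0 v != c1 v].
exists (size vs), (fun i => mix (fun v => v \in take i vs) c0 c1); split.
  by rewrite -cardE; apply: subset_leq_card; apply/subsetP => v; rewrite inE => /diffD.
split; last split; last split => //.
- by move=> v; rewrite /mix take0.
- move=> v; rewrite /mix take_size mem_enum inE.
  by case: eqVneq.
- move=> i lt_i; have [x0 _] : exists x0 : V, true by case: vs lt_i => // x; exists x.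
  have vs_uniq : uniq vs := enum_uniq _.
  set x := nth x0 vs i.
  have x_new : x \notin take i vs by rewrite in_take ?mem_nth // index_uniq // ltnn.
  have x_diff : c0 x != c1 x by have := mem_nth x0 lt_i; rewrite mem_enum.
  rewrite /differ_one (take_nth x0 lt_i) -(card1 x); apply: eq_card => v.
  rewrite !inE /mix /= mem_rcons inE -/x.
  case: (eqVneq v x) => [->|_] /=; first by rewrite (negbTE x_new) x_diff.
  by rewrite eqxx.
Qed.

End Recolorable.

Section Shape.
Variables (n t : nat) (e : rel 'I_n).
Local Notation V := (Gvtx n t).
Local Notation g a := (inl (inl a)).
Local Notation b i j := (inl (inr (i, j))).
Local Notation k := (n + t + 1).

Definition B_proper (c : V -> nat) : Prop :=
  forall i j i' j' : 'I_t, i != i' -> j != j' -> c (b i j) != c (b i' j').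

(* Every vertex [g a] keeps its color [a + 1] or is lifted to the color [k] of
   [C_{n+t+1}], which it does not see; a vertex of [V_B] may then borrow the
   color [a + 1] of a lifted [g a]. *)
Lemma shaped_kcoloring (c : V -> nat) :
  irreflexive e ->
  (forall a, c (g a) = a + 1 \/ c (g a) = k) ->
  (forall a a', e a a' -> c (g a) = k -> c (g a') != k) ->
  (forall i j, n < c (b i j) <= n + t \/
               exists2 a : 'I_n, c (b i j) = a + 1 & c (g a) = k) ->
  B_proper c ->
  (forall m z, c (inr (m, z)) = m + 1) ->
  is_kcoloring (Gedge e) k c.
Proof.
move=> e_irr cG cGG cB cBB cC.
have cB_range i j : 0 < c (b i j) <= n + t.
  by case: (cB i j) => [|[a -> _]]; [lia | have := ltn_ord a; lia].
have cGG_neq a a' : e a a' -> c (g a) != c (g a').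
  move=> e_aa'; case: (cG a) => ca; case: (cG a') => ca'; rewrite ca ca'.
  - by apply: contraTneq e_aa' => /addIn/val_inj ->; rewrite e_irr.
  - by have := ltn_ord a; lia.
  - by have := ltn_ord a'; lia.
  - by have := cGG _ _ e_aa' ca; rewrite ca' eqxx.
have cGB_neq a i j : c (g a) != c (b i j).
  case: (cB i j) => [|[a' -> ga']]; first by have := ltn_ord a; case: (cG a) => ->; lia.
  case: (cG a) => ca; rewrite ca; last by have := ltn_ord a'; lia.
  apply/negP => /eqP/addIn/val_inj eq_a; move: ga'; rewrite -eq_a ca.
  by have := ltn_ord a; lia.
have cGC_neq (a : 'I_n) (m : 'I_k) z :
    (m : nat) != a -> (m : nat) != n + t -> c (g a) != c (inr (m, z)).
  by move=> /eqP ? /eqP ?; rewrite cC; case: (cG a) => ->; lia.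
have cBC_neq i j (m : 'I_k) z :
    (m : nat) == n + t -> c (b i j) != c (inr (m, z)).
  by move=> /eqP ?; rewrite cC; have := cB_range i j; lia.
split.
  case=> [[a|[i j]]|[m z]].
  - by have := ltn_ord a; case: (cG a) => ->; lia.
  - by case/andP: (cB_range i j) => -> /leq_trans ->; rewrite // leq_addr.
  - by rewrite cC; have := ltn_ord m; lia.
case=> [[a|[i j]]|[m z]] [[a'|[i' j']]|[m' z']] /=.
- exact: cGG_neq.
- by move=> _; apply: cGB_neq.
- by case/andP; apply: cGC_neq.
- by move=> _; rewrite eq_sym; apply: cGB_neq.
- by case/andP; apply: cBB.
- exact: cBC_neq.
- by case/andP => ? ?; rewrite eq_sym; apply: cGC_neq.
- by move=> ?; rewrite eq_sym; apply: cBC_neq.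
- by [].
Qed.

End Shape.

Section Recoloring.
Variables (n T : nat) (e : rel 'I_n) (L : seq 'I_n).
Hypotheses (e_irr : irreflexive e) (L_uniq : uniq L) (L_size : size L = T).
Hypothesis L_indep : {in L &, forall a a', ~~ e a a'}.
Local Notation V := (Gvtx n T.+1).
Local Notation g a := (inl (inl a)).
Local Notation b i j := (inl (inr (i, j))).
Local Notation k := (n + T.+1 + 1).

Definition raise (c : V -> nat) (v : V) : nat :=
  if v is g a then (if a \in L then k else c v) else c v.

Definition L_at (r : nat) : nat := nth 0 (map val L) r.

Lemma lval_mem r : r < T -> exists2 a : 'I_n, L_at r = a & a \in L.
Proof.
move=> lt_r; have : L_at r \in map val L by apply: mem_nth; rewrite size_map L_size.
by case/mapP => a a_L ->; exists a.
Qed.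

Lemma lval_neq r r' : r < T -> r' < T -> r != r' -> L_at r != L_at r'.
Proof.
move=> lt_r lt_r' neq_r; rewrite /L_at nth_uniq ?size_map ?L_size //.
by rewrite (map_inj_uniq val_inj).
Qed.

Definition row_color (i : 'I_T.+1) : nat := if i < T then L_at i + 1 else n + T.+1.

Definition gamma_rows (v : V) : nat :=
  if v is b i j then row_color i else raise (@alpha n T.+1) v.

Definition gamma_cols (v : V) : nat :=
  if v is b i j then (if j < T then n + (j + 1) else row_color i) else raise (@alpha n T.+1) v.

Definition raised_off_B (c : V -> nat) : Prop :=
  (forall a, c (g a) = raise (@alpha n T.+1) (g a)) /\ (forall m z, c (inr (m, z)) = m + 1).

Definition B_palette (c : V -> nat) : Prop :=
  forall i j, [\/ c (b i j) = n + (i + 1), c (b i j) = row_color i | c (b i j) = n + (j + 1)].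

Lemma row_color_cases (i : 'I_T.+1) :
  [/\ i <= T, i < T -> 0 < row_color i <= n & ~~ (i < T) -> row_color i = n + T.+1].
Proof.
rewrite /row_color -ltnS ltn_ord; split=> // [lt_i|/negbTE -> //].
by rewrite lt_i; case/lval_mem: lt_i => a -> _; have := ltn_ord a; lia.
Qed.

Lemma row_color_neq (i i' : 'I_T.+1) : i != i' -> row_color i != row_color i'.
Proof.
move=> neq_i; have [le_i lo_i _] := row_color_cases i; have [le_i' lo_i' _] := row_color_cases i'.
rewrite /row_color; case: ifP => lt_i; case: ifP => lt_i'.
- by rewrite eqn_add2r lval_neq.
- by have := lo_i lt_i; rewrite /row_color lt_i; lia.
- by have := lo_i' lt_i'; rewrite /row_color lt_i'; lia.
- case/negP: neq_i; apply/eqP/ord_inj.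
  by move: lt_i lt_i' le_i le_i' => /negbT ? /negbT ? ? ?; lia.
Qed.

Lemma B_proper_intro (c : V -> nat) :
  (forall i j i' j' : 'I_T.+1, (i : nat) != i' -> (j : nat) != j' ->
     row_color i != row_color i' -> c (b i j) != c (b i' j')) ->
  B_proper c.
Proof. by move=> c_neq i j i' j' neq_i neq_j; apply: c_neq; rewrite ?row_color_neq. Qed.

Lemma B_proper_rows X : B_proper (mix X (raise (@alpha n T.+1)) gamma_rows).
Proof.
apply: B_proper_intro => i j i' j' neq_i neq_j neq_row; rewrite /mix /=.
have [le_i lo_i hi_i] := row_color_cases i; have [le_i' lo_i' hi_i'] := row_color_cases i'.
by repeat case: ifP => ?; lia.
Qed.

Lemma B_proper_cols X : B_proper (mix X gamma_rows gamma_cols).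
Proof.
apply: B_proper_intro => i j i' j' neq_i neq_j neq_row; rewrite /mix /=.
have [le_i lo_i hi_i] := row_color_cases i; have [le_i' lo_i' hi_i'] := row_color_cases i'.
have := ltn_ord j; have := ltn_ord j'.
by repeat case: ifP => ?; lia.
Qed.

Lemma B_proper_last X : B_proper (mix X gamma_cols (raise (@beta n T.+1))).
Proof.
apply: B_proper_intro => i j i' j' neq_i neq_j neq_row; rewrite /mix /=.
have [le_i lo_i hi_i] := row_color_cases i; have [le_i' lo_i' hi_i'] := row_color_cases i'.
have := ltn_ord j; have := ltn_ord j'.
by repeat case: ifP => ?; lia.
Qed.

Lemma raised_kcoloring (c : V -> nat) :
  raised_off_B c -> B_palette c -> B_proper c -> is_kcoloring (Gedge e) k c.
Proof.
move=> [cG cC] cB cBB; apply: shaped_kcoloring => //.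
- by move=> a; rewrite cG /=; case: ifP; [right | left].
- move=> a a' e_aa'; rewrite !cG /=; have := ltn_ord a; have := ltn_ord a'.
  case: ifP => a_L; case: ifP => a'_L; try lia.
  by have := L_indep a_L a'_L; rewrite e_aa'.
- move=> i j; have [le_i lo_i hi_i] := row_color_cases i; have := ltn_ord j.
  case: (cB i j) => ->; try by left; lia.
  case: (ltnP i T) => lt_i; last by left; rewrite hi_i -?ltnNge //; lia.
  right; have [a eq_a a_L] := lval_mem lt_i; exists a; last by rewrite cG /= a_L.
  by rewrite /row_color lt_i eq_a.
Qed.

Lemma recolorable_B (c0 c1 : V -> nat) (A B : pred 'I_T.+1) :
  raised_off_B c0 -> raised_off_B c1 -> B_palette c0 -> B_palette c1 ->
  (forall i j, c0 (b i j) != c1 (b i j) -> A i && B j) ->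
  (forall X, B_proper (mix X c0 c1)) ->
  recolorable (Gedge e) k c0 c1 (#|A| * #|B|).
Proof.
move=> [c0G c0C] [c1G c1C] pal0 pal1 diffAB mix_proper.
have inj_b : injective (fun x => inl (inr x) : V) by move=> x y [].
rewrite -cardX -(card_imset _ inj_b).
apply: recolorable_mix => [[[a|[i j]]|[m z]]|X].
- by rewrite c0G c1G eqxx.
- by move/diffAB => ABij; apply: imset_f; rewrite inE.
- by rewrite c0C c1C eqxx.
apply: raised_kcoloring => //.
- by split=> [a|m z]; rewrite /mix ?c0G ?c1G ?c0C ?c1C if_same.
- by move=> i j; rewrite /mix; case: ifP.
Qed.

Lemma recolorable_raise (c : V -> nat) :
  (forall a, c (g a) = a + 1) -> (forall i j, n < c (b i j) <= n + T.+1) ->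
  B_proper c -> (forall m z, c (inr (m, z)) = m + 1) ->
  recolorable (Gedge e) k c (raise c) T.
Proof.
move=> cG cB cBB cC.
apply: (@recolorable_le _ _ _ _ _ #|[set g a | a in L]|).
  by rewrite -L_size; apply: leq_trans (leq_imset_card _ _) (card_size _).
apply: recolorable_mix => [[[a|x]|y]|X] /=; rewrite ?eqxx //.
  by case: ifP => [a_L _|_]; [apply: imset_f | rewrite eqxx].
have raised_L a : mix X c (raise c) (g a) = k -> a \in L.
  rewrite /mix /= cG; have := ltn_ord a.
  by case: ifP => _; [case: ifP => // _|]; lia.
apply: shaped_kcoloring => //.
- by move=> a; rewrite /mix /= cG; case: ifP => _; [case: ifP|]; by [right|left].
- move=> a a' e_aa' /raised_L a_L; apply/eqP => /raised_L a'_L.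
  by have := L_indep a_L a'_L; rewrite e_aa'.
- by move=> i j; left; rewrite /mix /= if_same.
- by move=> i j i' j' neq_i neq_j; rewrite /mix /= !if_same; apply: cBB.
- by move=> m z; rewrite /mix /= if_same.
Qed.

Local Notation low := [pred i : 'I_T.+1 | i < T].

Lemma card_low : #|low| = T.
Proof.
rewrite -[RHS]/(T.+1.-1) -[in RHS](card_ord T.+1) -(cardC1 ord_max).
by apply: eq_card => i; rewrite !inE -val_eqE /= ltn_neqAle -ltnS ltn_ord andbT.
Qed.

Lemma card_not_low : #|[predC low]| = 1.
Proof. by apply/eqP; rewrite -(eqn_add2l #|low|) cardC card_low card_ord addn1. Qed.

Lemma recolorable_rows :
  recolorable (Gedge e) k (raise (@alpha n T.+1)) gamma_rows (T * T.+1).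
Proof.
have := @recolorable_B (raise (@alpha n T.+1)) gamma_rows low predT.
rewrite card_low card_ord; apply=> //; last exact: B_proper_rows.
- by move=> i j; apply: Or31.
- by move=> i j; apply: Or32.
- move=> i j /=; rewrite /row_color andbT; case: ltnP => // le_Ti.
  by have := ltn_ord i; lia.
Qed.

Lemma recolorable_cols : recolorable (Gedge e) k gamma_rows gamma_cols (T.+1 * T).
Proof.
have := @recolorable_B gamma_rows gamma_cols predT low.
rewrite card_low card_ord; apply=> //; last exact: B_proper_cols.
- by move=> i j; apply: Or32.
- by move=> i j /=; case: ifP => _; [apply: Or33 | apply: Or32].
- by move=> i j /=; case: ifP; rewrite ?eqxx.
Qed.

Lemma recolorable_last :
  recolorable (Gedge e) k gamma_cols (raise (@beta n T.+1)) (T * 1).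
Proof.
have := @recolorable_B gamma_cols (raise (@beta n T.+1)) low [predC low].
rewrite card_low card_not_low; apply=> //; last exact: B_proper_last.
- by move=> i j /=; case: ifP => _; [apply: Or33 | apply: Or32].
- by move=> i j; apply: Or33.
- move=> i j /=; rewrite !inE /row_color.
  case: (ltnP j T) => [_|le_Tj]; first by rewrite eqxx.
  by case: (ltnP i T) => //= _; have := ltn_ord j; lia.
Qed.

Lemma recolorable_alpha_beta :
  recolorable (Gedge e) k (@alpha n T.+1) (@beta n T.+1)
    (T + T * T.+1 + T.+1 * T + T * 1 + T).
Proof.
have alpha_raise : recolorable (Gedge e) k (@alpha n T.+1) (raise (@alpha n T.+1)) T.
  apply: recolorable_raise => // [i j | i j i' j' neq_i _].
    by have := ltn_ord i; rewrite /=; lia.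
  by rewrite /= eqn_add2l eqn_add2r.
have beta_raise : recolorable (Gedge e) k (@beta n T.+1) (raise (@beta n T.+1)) T.
  apply: recolorable_raise => // [i j | i j i' j' _ neq_j].
    by have := ltn_ord j; rewrite /=; lia.
  by rewrite /= eqn_add2l eqn_add2r.
apply: recolorable_trans (recolorable_sym beta_raise).
apply: recolorable_trans recolorable_last.
apply: recolorable_trans recolorable_cols.
exact: recolorable_trans alpha_raise recolorable_rows.
Qed.
End Recoloring.

Theorem mainTheorem3 (n t : nat) (e : rel 'I_n)
  (e_sym : symmetric e) (e_irr : irreflexive e) (ht : 1 <= t)
  (hind : exists S : {set 'I_n},
            t - 1 <= #|S| /\ {in S &, forall x y, ~~ e x y}) :
  exists (m : nat) (p : nat -> Gvtx n t -> nat),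
    m <= 2 * t + 2 * t ^ 2 /\
    recolor_walk (@Gedge n t e) (n + t + 1) (@alpha n t) (@beta n t) m p.
Proof.
case: t ht hind => [//|T] _ [S [card_S S_indep]].
pose L := take T (enum S).
have L_uniq : uniq L := take_uniq _ (enum_uniq _).
have L_size : size L = T by rewrite size_takel // -cardE; lia.
have L_indep : {in L &, forall a a', ~~ e a a'}.
  by move=> a a' /mem_take a_S /mem_take a'_S; apply: S_indep; rewrite -mem_enum.
apply: recolorable_le (recolorable_alpha_beta e_irr L_uniq L_size L_indep).
lia.
Qed.
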